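(* Let $\rho$ be a Drinfeld $\mathbb{F}_q[t]$-module of rank $r$ defined over a field $K\subseteq\overline{k}$, with $\omega_1,\dots,\omega_r$ an $A$-basis of $\Lambda_\rho$, $f_i=\sum_{m\ge0}\exp_\rho(\omega_i/\theta^{m+1})t^m\in K^{\mathrm{sep}}[[t]]$, and $\Upsilon\in\mathrm{Mat}_r(K^{\mathrm{sep}}[[t]])$ defined by $\Upsilon_{ij}=f_i^{(j-1)}$. Then for every $\epsilon\in\mathrm{Gal}(K^{\mathrm{sep}}/K)$, $\epsilon(\Upsilon^{(1)})=g_\epsilon\Upsilon^{(1)}$.
   Context: $\mathbb{F}_q$ is the field with $q$ elements, $\theta,t$ independent variables, $A=\mathbb{F}_q[\theta]$, $k=\mathbb{F}_q(\theta)$, $\mathbb{C}_\infty$ the completion of an algebraic closure of $\mathbb{F}_q((1/\theta))$, $\overline{k}$ the algebraic closure of $k$ in $\mathbb{C}_\infty$, $K^{\mathrm{sep}}$ the separable closure of $K$ in $\overline{k}$. For $f=\sum a_it^i$, $f^{(n)}=\sum a_i^{q^n}t^i$ (entrywise on matrices). $\tau$ is the $q$-power Frobenius; $\rho$ is the $\mathbb{F}_q$-algebra map $\mathbb{F}_q[t]\to K[\tau]$ determined by $\rho_t=\theta+\kappa_1\tau+\dots+\kappa_r\tau^r$ ($\kappa_r\ne0$), acting on $\mathbb{C}_\infty$ by $(\sum c_i\tau^i)(x)=\sum c_ix^{q^i}$. $\exp_\rho$ is the unique entire $\mathbb{F}_q$-linear series $z+\sum_{i\ge1}\alpha_iz^{q^i}$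 with $\exp_\rho(\theta z)=\rho_t(\exp_\rho(z))$; $\Lambda_\rho=\ker\exp_\rho$. $\xi_{i,m}=\exp_\rho(\omega_i/\theta^{m+1})$, $x_i=(\xi_{i,0},\xi_{i,1},\dots)$ form an $\mathbb{F}_q[[t]]$-basis of the $t$-adic Tate module $T_t(\rho)=\varprojlim\rho[t^m]$; $\mathrm{Gal}(K^{\mathrm{sep}}/K)$ acts on it via $\varphi_t$, and $g_\epsilon\in\mathrm{GL}_r(\mathbb{F}_q[[t]])$ is defined by $\varphi_t(\epsilon)\mathbf{x}=g_\epsilon\mathbf{x}$, $\mathbf{x}=[x_1,\dots,x_r]^{\mathrm{tr}}$. Galois acts on $K^{\mathrm{sep}}[[t]]$ coefficientwise and on matrices entrywise. *)

From HB Require Import structures.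
From mathcomp Require Import all_boot all_order all_algebra all_field.
From mathcomp Require Import reals.
Set Implicit Arguments. Unset Strict Implicit. Unset Printing Implicit Defensive.
Import Order.TTheory GRing.Theory Num.Theory.
Local Open Scope ring_scope.

Section Defs.
Variables (R : realType) (C : fieldType).

Definition is_nonarch_abs (nrm : C -> R) : Prop :=
  [/\ forall x, 0 <= nrm x,
      forall x, nrm x = 0 <-> x = 0,
      forall x y, nrm (x * y) = nrm x * nrm y
    & forall x y, nrm (x + y) <= Num.max (nrm x) (nrm y)].

Definition cvg_to (nrm : C -> R) (u : nat -> C) (l : C) : Prop :=
  forall eps : R, 0 < eps -> exists N, forall n, (N <= n)%N -> nrm (u n - l) < eps.

Definition cauchy_seq (nrm : C -> R) (u : nat -> C) : Prop :=
  forall eps : R, 0 < eps -> exists N, forall m n, (N <= m)%N -> (N <= n)%N ->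
    nrm (u m - u n) < eps.

Definition complete_abs (nrm : C -> R) : Prop :=
  forall u, cauchy_seq nrm u -> exists l, cvg_to nrm u l.

Definition in_Fq (q : nat) (c : C) : Prop := c ^+ q = c.

Definition poly_over_Fq (q : nat) (a : {poly C}) : Prop := forall i, in_Fq q a`_i.

Definition in_A (q : nat) (theta x : C) : Prop :=
  exists a : {poly C}, poly_over_Fq q a /\ x = a.[theta].

Definition in_k (q : nat) (theta x : C) : Prop :=
  exists a b : {poly C}, [/\ poly_over_Fq q a, poly_over_Fq q b, b.[theta] != 0
                           & x = a.[theta] / b.[theta]].

Definition algebraic_over (S : C -> Prop) (x : C) : Prop :=
  exists p : {poly C}, [/\ p != 0, forall i, S p`_i & root p x].

Definition in_kbar (q : nat) (theta x : C) : Prop := algebraic_over (in_k q theta) x.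

Definition is_subfield (S : C -> Prop) : Prop :=
  [/\ S 0, S 1, (forall x y, S x -> S y -> S (x - y)),
      (forall x y, S x -> S y -> S (x * y))
    & (forall x, S x -> x != 0 -> S x^-1)].

Definition in_sep (K : C -> Prop) (x : C) : Prop :=
  exists p : {poly C}, [/\ p != 0, forall i, K p`_i, root p x & separable_poly p].

(* eps in Gal(K^sep/K): a field automorphism of K^sep fixing K pointwise
   (represented by a function C -> C whose values off K^sep are irrelevant) *)
Definition is_gal (K : C -> Prop) (eps : C -> C) : Prop :=
  (forall x, in_sep K x -> in_sep K (eps x)) /\
  [/\ forall x y, in_sep K x -> in_sep K y -> eps (x + y) = eps x + eps y,
      forall x y, in_sep K x -> in_sep K y -> eps (x * y) = eps x * eps y,
      forall x y, in_sep K x -> in_sep K y -> eps x = eps y -> x = y,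
      forall y, in_sep K y -> exists2 x, in_sep K x & eps x = y
    & forall x, K x -> eps x = x].

Definition rho_t (q : nat) (theta : C) (kappa : nat -> C) (r : nat) (z : C) : C :=
  theta * z + \sum_(1 <= j < r.+1) kappa j * z ^+ (q ^ j).

Definition rho_tn q theta kappa r (n : nat) (z : C) : C := iter n (rho_t q theta kappa r) z.

Definition ps_mul (a b : nat -> C) : nat -> C :=
  fun m => \sum_(n < m.+1) a n * b (m - n)%N.

Definition ps_twist (q k : nat) (f : nat -> C) : nat -> C := fun m => f m ^+ (q ^ k).

Definition ps_gal (eps : C -> C) (f : nat -> C) : nat -> C := fun m => eps (f m).

Definition psmx_mul (r : nat) (g M : 'I_r -> 'I_r -> nat -> C) : 'I_r -> 'I_r -> nat -> C :=
  fun i j m => \sum_(k < r) ps_mul (g i k) (M k j) m.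

(* f_i = sum_m exp_rho(omega_i / theta^(m+1)) t^m ; also x_i = (xi_{i,0}, xi_{i,1}, ...) *)
Definition f_ser (E : C -> C) (theta : C) (r : nat) (omega : 'I_r -> C) (i : 'I_r) : nat -> C :=
  fun m => E (omega i / theta ^+ m.+1).

(* Upsilon_{ij} = f_i^(j-1), with 0-based column index j : 'I_r *)
Definition Upsilon q E theta r omega : 'I_r -> 'I_r -> nat -> C :=
  fun i j => ps_twist q j (f_ser E theta omega i).

Definition Upsilon1 q E theta r omega : 'I_r -> 'I_r -> nat -> C :=
  fun i j => ps_twist q 1 (Upsilon q E theta omega i j).

(* F_q[[t]]-action on the Tate module T_t(rho) = lim rho[t^(m+1)] (component m):
   (a . x)_m = sum_{n <= m} a_n rho_{t^n}(x_m) *)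
Definition tate_scale q theta kappa r (a x : nat -> C) : nat -> C :=
  fun m => \sum_(n < m.+1) a n * rho_tn q theta kappa r n (x m).

End Defs.

From HB Require Import structures.
From mathcomp Require Import all_boot all_order all_algebra all_field.
From mathcomp Require Import reals boolp ring.
Import Order.TTheory GRing.Theory Num.Theory.
Local Open Scope ring_scope.

(* The entries f_i(m) = exp_rho(omega_i / theta^(m+1)) are t^(m+1)-torsion points of rho,
   i.e. roots of rho_(t^(m+1)), a polynomial over K whose derivative is the nonzero
   constant theta^(m+1); hence they lie in K^sep, where eps is a ring automorphism.
   Applying eps to Upsilon^(1)_ij(m) = f_i(m)^(q^(j+1)) thus gives eps(f_i(m))^(q^(j+1)).
   By definition of g_eps, eps(f_i(m)) = sum_k sum_(n <= m) g_ik(n) rho_(t^n)(f_k(m)),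
   and rho_(t^n)(f_k(m)) = f_k(m - n) by the functional equation of exp_rho. Raising to
   the power q^(j+1) is additive in characteristic p and fixes the coefficients g_ik(n)
   in F_q, which yields the (i, j) entry of g_eps Upsilon^(1). *)

Set Implicit Arguments. Unset Strict Implicit. Unset Printing Implicit Defensive.

Section MinimalPolynomial.
Variables (F L : fieldType) (iota : {rmorphism F -> L}).
Local Notation "p ^ f" := (map_poly f p) : ring_scope.

Lemma exists_minsize_root_poly (x : L) (P : {poly F}) :
  P != 0 -> root (P ^ iota) x ->
  exists p : {poly F}, [/\ root (p ^ iota) x, p != 0 &
    forall q, root (q ^ iota) x -> q != 0 -> (size p <= size q)%N].
Proof.
move=> nzP rP.
pose has_root_of_size n :=
  `[< exists p : {poly F}, [/\ root (p ^ iota) x, p != 0 & size p = n] >].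
have exP : exists n, has_root_of_size n by exists (size P); apply/asboolP; exists P.
case: (ex_minnP exP) => n /asboolP[p [rp nzp <-]] minn.
by exists p; split=> // q rq nzq; apply: minn; apply/asboolP; exists q.
Qed.

(* In F[X]/(p), p a minimal polynomial of x, the separable elements form a subfield,
   so x ^+ k is separable along with x. *)
Lemma separable_root_exprn (x : L) (P : {poly F}) k :
  separable_poly P -> root (P ^ iota) x ->
  exists2 Q : {poly F}, separable_poly Q & root (Q ^ iota) (x ^+ k).
Proof.
move=> sepP rP.
have [p [rp nzp minp]] := exists_minsize_root_poly (separable_poly_neq0 sepP) rP.
have irr_p : irreducible_poly p by apply/(subfx_irreducibleP rp nzp).
pose M := SubFieldExtType rp irr_p; pose z : M := subfx_root iota x p.
have map_inj (f : {poly F}) : (f ^ in_alg M) ^ subfx_inj = f ^ iota.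
  by apply/polyP => i; rewrite !coef_map /= subfx_inj_base.
have root_inj (f : {poly F}) (y : M) :
    root (f ^ in_alg M) y = root (f ^ iota) (subfx_inj y).
  by rewrite /root -map_inj horner_map fmorph_eq0.
have sep_z : separable_element 1%VS z.
  apply/separable_elementP; exists (P ^ in_alg M); split.
  - by apply/polyOver1P; exists P.
  - by rewrite root_inj subfx_inj_root.
  - by rewrite separable_map.
have sep_zk : separable_element 1%VS (z ^+ k).
  move: sep_z; rewrite adjoin_separable_eq => /separableP; apply.
  by rewrite rpredX // memv_adjoin.
have /polyOver1P[Q DQ] := minPolyOver 1%VS (z ^+ k).
exists Q; first by move: sep_zk; rewrite /separable_element DQ separable_map.
by have := root_minPoly 1%VS (z ^+ k); rewrite DQ root_inj rmorphXn /= subfx_inj_root.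
Qed.

End MinimalPolynomial.

Section DrinfeldTorsion.
Variables (C : fieldType) (p q : nat) (theta : C) (kappa : nat -> C) (r : nat).
Hypotheses (hchar : p \in [pchar C]) (p_dvd_q : (p %| q)%N).

Definition rho_poly : {poly C} :=
  theta *: 'X + \sum_(1 <= j < r.+1) kappa j *: 'X^(q ^ j).

Definition rho_iter_poly n : {poly C} := iter n (fun P : {poly C} => rho_poly \Po P) 'X.

Lemma horner_rho_poly z : rho_poly.[z] = rho_t q theta kappa r z.
Proof.
rewrite hornerD hornerZ hornerX horner_sum; congr (_ + _).
by apply: eq_bigr => j _; rewrite hornerZ hornerXn.
Qed.

Lemma horner_rho_iter_poly n z : (rho_iter_poly n).[z] = rho_tn q theta kappa r n z.
Proof.
elim: n => [|n IHn]; first by rewrite hornerX.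
rewrite /rho_iter_poly iterS horner_comp -/(rho_iter_poly n) IHn horner_rho_poly.
by rewrite /rho_tn iterS.
Qed.

(* The twisted terms kappa_j tau^j have zero derivative since p divides q^j. *)
Lemma deriv_rho_poly : rho_poly^`() = theta%:P.
Proof.
rewrite derivD derivZ derivX alg_polyC raddf_sum big1_seq ?addr0 // => j.
rewrite mem_index_iota => /andP[_ /andP[j_gt0 _]].
have /eqP qj0 : (q ^ j)%:R == 0 :> C.
  by rewrite -(dvdn_pcharf hchar) (dvdn_trans p_dvd_q) // dvdn_exp.
by rewrite /= derivZ derivXn -mulr_natr -polyC_natr qj0 mulr0 scaler0.
Qed.

Lemma deriv_rho_iter_poly n : (rho_iter_poly n)^`() = (theta ^+ n)%:P.
Proof.
elim: n => [|n IHn]; first by rewrite derivX.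
rewrite /rho_iter_poly iterS deriv_comp -/(rho_iter_poly n) IHn deriv_rho_poly.
by rewrite comp_polyC -polyCM exprS.
Qed.

Lemma separable_rho_iter_poly n : theta != 0 -> separable_poly (rho_iter_poly n).
Proof.
move=> nz_theta; rewrite unlock deriv_rho_iter_poly -[_%:P]mulr1 mul_polyC.
by rewrite coprimepZr ?expf_neq0 // coprimep1.
Qed.

Lemma rho_iter_poly_over (S : semiringClosed C) n :
  theta \in S -> (forall j, (1 <= j <= r)%N -> kappa j \in S) ->
  rho_iter_poly n \is a polyOver S.
Proof.
move=> S_theta S_kappa.
have S_rho : rho_poly \is a polyOver S.
  rewrite rpredD ?polyOverZ ?polyOverX // big_seq rpred_sum // => j.
  by rewrite mem_index_iota ltnS => j_range; rewrite polyOverZ ?polyOverXn ?S_kappa.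
elim: n => [|n IHn]; first exact: polyOverX.
by rewrite /rho_iter_poly iterS polyOver_comp.
Qed.

End DrinfeldTorsion.

Section Subfield.
Variables (C : fieldType) (K : C -> Prop) (hK : is_subfield K).

Definition mem_subfield : {pred C} := fun c => `[< K c >].

Lemma mem_subfield_divring_closed : divring_closed mem_subfield.
Proof.
case: hK => K0 K1 KB KM KV; split; first exact/asboolP.
  by move=> u v /asboolP Ku /asboolP Kv; apply/asboolP/KB.
move=> u v /asboolP Ku /asboolP Kv; apply/asboolP/KM => //.
by have [->|nz_v] := eqVneq v 0; [rewrite invr0 | exact: KV].
Qed.

HB.instance Definition _ :=
  GRing.isDivringClosed.Build C mem_subfield mem_subfield_divring_closed.

(* K packaged as a fieldType, so that the separability theory of field extensions applies. *)
Record subfield_type := SubfieldElem { subfield_val : C; _ : subfield_val \in mem_subfield }.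
HB.instance Definition _ := [isSub for subfield_val].
HB.instance Definition _ := [Choice of subfield_type by <:].
HB.instance Definition _ := [SubChoice_isSubIntegralDomain of subfield_type by <:].
HB.instance Definition _ := [SubIntegralDomain_isSubField of subfield_type by <:].

Lemma in_sepP (x : C) :
  in_sep K x <->
  exists2 P : {poly C}, P \is a polyOver mem_subfield & separable_poly P && root P x.
Proof.
split=> [[P [_ KP rP sP]]|[P /polyOverP KP /andP[sP rP]]].
  by exists P; [apply/polyOverP => i; apply/asboolP/KP | rewrite sP rP].
by exists P; split=> [|i||]; [exact: separable_poly_neq0 | exact/asboolP/KP | |].
Qed.

Lemma in_sep_exprn (x : C) k : in_sep K x -> in_sep K (x ^+ k).
Proof.
move=> /in_sepP[P /polyOverP KP /andP[sP rP]].
pose PK : {poly subfield_type} := \poly_(i < size P) SubfieldElem (KP i).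
have DP : map_poly val PK = P.
  apply/polyP => i; rewrite coef_map coef_poly /=.
  by case: ltnP => // le_P_i; rewrite nth_default.
have sPK : separable_poly PK by rewrite -(separable_map val) DP.
have [Q sQ rQ] := separable_root_exprn k sPK (etrans (congr1 (root^~ x) DP) rP).
apply/in_sepP; exists (map_poly val Q).
  by apply/polyOverP => i; rewrite coef_map /= (valP Q`_i).
by rewrite separable_map sQ.
Qed.

Lemma gal_exprn (eps : C -> C) (x : C) n :
  is_gal K eps -> in_sep K x -> eps (x ^+ n) = eps x ^+ n.
Proof.
case=> _ [_ eps_mul _ _ eps_fix] sep_x; elim: n => [|n IHn].
  by rewrite !expr0 eps_fix //; case: hK.
by rewrite !exprS eps_mul ?IHn //; exact: in_sep_exprn.
Qed.

Lemma rho_torsion_in_sep p q theta kappa r n x :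
  p \in [pchar C] -> (p %| q)%N -> K theta -> (forall j, (1 <= j <= r)%N -> K (kappa j)) ->
  theta != 0 -> rho_tn q theta kappa r n x = 0 -> in_sep K x.
Proof.
move=> hchar p_dvd_q K_theta K_kappa nz_theta tors_x; apply/in_sepP.
exists (rho_iter_poly q theta kappa r n).
  apply: (@rho_iter_poly_over _ _ _ _ _ (mem_subfield : semiringClosed C)).
    exact/asboolP.
  by move=> j /K_kappa K_kappa_j; apply/asboolP.
rewrite (separable_rho_iter_poly _ _ hchar p_dvd_q) //=.
by rewrite /root horner_rho_iter_poly tors_x.
Qed.

End Subfield.

Section Frobenius.
Variables (C : fieldType) (N : nat) (pchar_N : [pchar C].-nat N).

Lemma expr_sum_pchar_nat (I : Type) (s : seq I) (F : I -> C) :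
  (\sum_(i <- s) F i) ^+ N = \sum_(i <- s) F i ^+ N.
Proof.
have N_gt0 : (0 < N)%N by case/andP: pchar_N.
apply: (big_morph (fun z : C => z ^+ N)) => [x y|]; first exact: exprDn_pchar.
by rewrite expr0n gtn_eqF.
Qed.

Lemma expr_ps_mul_pchar_nat (a b : nat -> C) m :
  (forall n, a n ^+ N = a n) -> ps_mul a b m ^+ N = ps_mul a (fun n => b n ^+ N) m.
Proof.
move=> a_fixed; rewrite /ps_mul expr_sum_pchar_nat.
by apply: eq_bigr => n _; rewrite exprMn a_fixed.
Qed.

End Frobenius.

Section TorsionSeries.
Variables (C : fieldType) (q : nat) (theta : C) (kappa : nat -> C) (r : nat).
Variable E : C -> C.
Hypotheses (E_theta : forall z, E (theta * z) = rho_t q theta kappa r (E z))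
           (nz_theta : theta != 0).
Variables (s : nat) (omega : 'I_s -> C).

Lemma rho_tn_exp n z : rho_tn q theta kappa r n (E z) = E (theta ^+ n * z).
Proof.
elim: n z => [|n IHn] z; first by rewrite mul1r.
by rewrite /rho_tn iterS -/(rho_tn _ _ _ _ n _) IHn -E_theta mulrA -exprS.
Qed.

Lemma rho_tn_f_ser k m n : (n <= m)%N ->
  rho_tn q theta kappa r n (f_ser E theta omega k m) = f_ser E theta omega k (m - n).
Proof.
move=> le_nm; rewrite /f_ser rho_tn_exp -{1}(subnKC le_nm) -addnS exprD.
by congr E; field; rewrite !expf_neq0.
Qed.

Lemma tate_scale_f_ser a k :
  tate_scale q theta kappa r a (f_ser E theta omega k) = ps_mul a (f_ser E theta omega k).
Proof.
by apply: funext => m; apply: eq_bigr => n _; rewrite rho_tn_f_ser // -ltnS.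
Qed.

Lemma f_ser_torsion k m : E (omega k) = 0 ->
  rho_tn q theta kappa r m.+1 (f_ser E theta omega k m) = 0.
Proof. by move=> E_omega; rewrite /f_ser rho_tn_exp mulrC divfK ?expf_neq0. Qed.

End TorsionSeries.

Lemma in_Fq_expr_pow (C : fieldType) q (c : C) s : in_Fq q c -> c ^+ (q ^ s) = c.
Proof. by move=> Fq_c; elim: s => [|s IHs]; rewrite ?expr1 // expnSr exprM IHs Fq_c. Qed.

Unset Implicit Arguments. Set Strict Implicit. Set Printing Implicit Defensive.

Theorem corollary3p2
  (* the field C = C_infinity: complete, algebraically closed, non-archimedean,
     characteristic p, containing theta with |theta| > 1, kbar dense in C *)
  (R : realType) (C : closedFieldType) (nrm : C -> R)
  (p e q : nat) (hp : prime p) (hchar : p \in [pchar C]) (he : (0 < e)%N)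
  (hq : q = (p ^ e)%N)
  (habs : is_nonarch_abs nrm) (hcomp : complete_abs nrm)
  (theta : C) (htheta : 1 < nrm theta)
  (hdense : forall (x : C) (eps : R), 0 < eps ->
              exists2 y, in_kbar q theta y & nrm (x - y) < eps)
  (* the field of definition K, k subset K subset kbar *)
  (K : C -> Prop) (hK : is_subfield K) (hKkbar : forall x, K x -> in_kbar q theta x)
  (* the Drinfeld module rho_t = theta + kappa_1 tau + ... + kappa_r tau^r over K *)
  (r : nat) (hr : (0 < r)%N) (kappa : nat -> C)
  (hthetaK : K theta) (hkappaK : forall j, (1 <= j <= r)%N -> K (kappa j))
  (hkappar : kappa r != 0)
  (* its exponential: entire series z + sum_{i>=1} alpha_i z^(q^i) with
     exp(theta z) = rho_t(exp z) *)
  (E : C -> C) (alpha : nat -> C) (halpha0 : alpha 0%N = 1)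
  (hE : forall z, cvg_to nrm (fun n => \sum_(i < n) alpha i * z ^+ (q ^ i)) (E z))
  (hEfun : forall z, E (theta * z) = rho_t q theta kappa r (E z))
  (* omega_1..omega_r an A-basis of Lambda_rho = ker exp_rho *)
  (omega : 'I_r -> C) (homega : forall i, E (omega i) = 0)
  (hspan : forall lam, E lam = 0 ->
     exists a : 'I_r -> C, (forall i, in_A q theta (a i)) /\ lam = \sum_(i < r) a i * omega i)
  (hfree : forall a : 'I_r -> C, (forall i, in_A q theta (a i)) ->
     \sum_(i < r) a i * omega i = 0 -> forall i, a i = 0)
  (* epsilon in Gal(K^sep/K) and its matrix g_eps in Mat_r(F_q[[t]]) on the basis x *)
  (eps : C -> C) (heps : is_gal K eps)
  (g : 'I_r -> 'I_r -> nat -> C) (hgFq : forall i j n, in_Fq q (g i j n))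
  (hg : forall i : 'I_r,
     ps_gal eps (f_ser E theta omega i)
     = (fun m => \sum_(k < r) tate_scale q theta kappa r (g i k) (f_ser E theta omega k) m)) :
  forall i j : 'I_r,
    ps_gal eps (Upsilon1 q E theta omega i j) = psmx_mul g (Upsilon1 q E theta omega) i j.
Proof.
have nz_theta : theta != 0.
  by apply: contraTneq htheta => ->; case: habs => _ nrm0 _ _; rewrite (nrm0 0).2 ?ltr10.
have p_dvd_q : (p %| q)%N by rewrite hq dvdn_exp.
have pchar_q_pow s : [pchar C].-nat (q ^ s)%N.
  by rewrite hq -expnM pnatX (eq_pnat _ (pcharf_eq hchar)) pnat_id.
have sep_f k m : in_sep K (f_ser E theta omega k m).
  apply: (rho_torsion_in_sep (n := m.+1) hK hchar p_dvd_q hthetaK hkappaK nz_theta).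
  exact: (f_ser_torsion hEfun nz_theta m (homega k)).
move=> i j; apply: funext => m.
rewrite /ps_gal /Upsilon1 /Upsilon /ps_twist -exprM (gal_exprn hK _ heps (sep_f i m)).
have -> : eps (f_ser E theta omega i m) =
          \sum_(k < r) ps_mul (g i k) (f_ser E theta omega k) m.
  rewrite [LHS](congr1 (fun h => h m) (hg i)) /=.
  by apply: eq_bigr => k _; rewrite (tate_scale_f_ser hEfun nz_theta).
rewrite -expnSr expr_sum_pchar_nat //; apply: eq_bigr => k _.
rewrite expr_ps_mul_pchar_nat // => [|n]; last exact: in_Fq_expr_pow.
by apply: eq_bigr => n _; rewrite /ps_twist -exprM expnSr.
Qed.
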